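(* Let $\mathcal C$ be an operadic category and $e$ an object of $\mathcal C$. Then the functor $R_e:\mathcal C/e\to\mathcal C^{|e|}$ preserves fibrewise triviality: if $\varphi:(\psi\varphi)\to\psi$ is a fibrewise trivial morphism of $\mathcal C/e$, then $R_e(\varphi)=\varphi^\psi$ is a fibrewise trivial morphism of $\mathcal C^{|e|}$.
   Context: Operadic categories: $\mathcal S$ is a skeleton of finite sets, with fixed equivalences $R_I:\mathcal S/I\to\mathcal S^I$ sending $f:J\to I$ to its fibres. An operadic category is a category $\mathcal C$ with a functor $|\cdot|:\mathcal C\to\mathcal S$ and functors $R_c:\mathcal C/c\to\mathcal C^{|c|}$ with $|\cdot|^{|c|}\circ R_c=R_{|c|}\circ(|\cdot|/c)$; the fibre $\psi^{-1}i$ of $\psi:c\to d$ at $i\in|d|$ is the $i$-th component of $R_d(\psi)$; for $\varphi:b\to c,\psi:c\to d$, $\varphi^\psi=R_d(\varphi:\psi\varphi\to\psi)$ with components $\varphi^\psi_j:(\psi\varphi)^{-1}j\to\psi^{-1}j$; $u$ is trivial if $|u|=1$ and $R_u=\mathrm{dom}$. Axioms: fibres of identities are trivial; double slice condition: for $\psi:c\to d$, $R_c\circ(\mathrm{dom}/\psi)=(\cong)\circ(\prod_jR_{\psi^{-1}j})\circ(R_d/\psi)$ as functors $(\mathcal C/d)/\psi\to\mathcal C^{|c|}$, via $\mathcal C^{|d|}/R_d\psi\cong\prod_j\mathcal C/\psi^{-1}j$ and $|c|\cong\sum_j|\psi|^{-1}j$ (on objects: $(\varphi^\psi_{|\psi|(i)})^{-1}i=\varphi^{-1}i$).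 A morphism $\varphi$ of $\mathcal C$ is fibrewise trivial if all its fibres are trivial objects. A morphism of $\mathcal C/e$ is fibrewise trivial if its underlying morphism in $\mathcal C$ is; a morphism $(\pi_i)_{i\in|e|}$ of $\mathcal C^{|e|}$ is fibrewise trivial if each $\pi_i$ is. *)

From mathcomp Require Import all_boot.
Set Implicit Arguments. Unset Strict Implicit. Unset Printing Implicit Defensive.

(* The skeleton S of finite sets: the object n is {0,...,n-1}; a map          *)
(* J -> I (J = n, I = m) is represented by a function nat -> nat considered   *)
(* only on arguments < n.  The fixed equivalence R_I : S/I -> S^I sends       *)
(* f : J -> I to the family of its fibres, where the fibre over i is the      *)
(* preimage of i enumerated in increasing order.                             *)

Definition preim (n : nat) (f : nat -> nat) (i : nat) : seq nat :=
  [seq k <- iota 0 n | f k == i].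

(* R_I on morphisms of S/I: for g : n' -> n a morphism from f' : n' -> I to
   f : n -> I in S/I (i.e. f' = f \o g), the induced map of fibres over i,
   f'^{-1} i -> f^{-1} i, transported along the increasing enumerations. *)
Definition fibmapS (n' n : nat) (f' f g : nat -> nat) (i k : nat) : nat :=
  index (g (nth 0 (preim n' f' i) k)) (preim n f i).

(* Operadic categories.  The category C is presented in the single-sorted     *)
(* ("arrows only") style: a type of objects, a type of morphisms with domain *)
(* and codomain, identities and composition  comp f g = f \o g  (defined when *)
(* cod g = dom f).                                                            *)
(*  ocard a        = |a| (an object of S),                                     *)
(*  cmap f        = |f| : |dom f| -> |cod f|,                                 *)
(*  fib f i       = f^{-1} i, the i-th component of R_{cod f}(f),            *)
(*  fibm phi psi i = phi^psi_i, the i-th component of                         *)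
(*                  R_{cod psi}(phi : psi phi -> psi),                        *)
(*                  a morphism (psi phi)^{-1} i -> psi^{-1} i.               *)

Record OpCatData := {
  Ob : Type;
  Mor : Type;
  dom : Mor -> Ob;
  cod : Mor -> Ob;
  idm : Ob -> Mor;
  comp : Mor -> Mor -> Mor;
  dom_idm : forall a, dom (idm a) = a;
  cod_idm : forall a, cod (idm a) = a;
  dom_comp : forall f g, cod g = dom f -> dom (comp f g) = dom g;
  cod_comp : forall f g, cod g = dom f -> cod (comp f g) = cod f;
  comp_idm_r : forall f, comp f (idm (dom f)) = f;
  comp_idm_l : forall f, comp (idm (cod f)) f = f;
  compA : forall f g h, cod h = dom g -> cod g = dom f ->
            comp f (comp g h) = comp (comp f g) h;
  ocard : Ob -> nat;
  cmap : Mor -> nat -> nat;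
  cmap_range : forall f k, k < ocard (dom f) -> cmap f k < ocard (cod f);
  cmap_idm : forall a k, k < ocard a -> cmap (idm a) k = k;
  cmap_comp : forall f g k, cod g = dom f -> k < ocard (dom g) ->
            cmap (comp f g) k = cmap f (cmap g k);
  fib : Mor -> nat -> Ob;
  fibm : Mor -> Mor -> nat -> Mor;
  dom_fibm : forall phi psi i, cod phi = dom psi -> i < ocard (cod psi) ->
            dom (fibm phi psi i) = fib (comp psi phi) i;
  cod_fibm : forall phi psi i, cod phi = dom psi -> i < ocard (cod psi) ->
            cod (fibm phi psi i) = fib psi i;
  fibm_idm : forall psi i, i < ocard (cod psi) ->
            fibm (idm (dom psi)) psi i = idm (fib psi i);
  fibm_comp : forall chi phi psi i,
            cod chi = dom phi -> cod phi = dom psi -> i < ocard (cod psi) ->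
            fibm (comp phi chi) psi i
              = comp (fibm phi psi i) (fibm chi (comp psi phi) i);
  (* |.|^{|c|} o R_c = R_{|c|} o (|.|/c) : on objects *)
  card_fib : forall f i, i < ocard (cod f) ->
            ocard (fib f i) = size (preim (ocard (dom f)) (cmap f) i);
  (* ... and on morphisms *)
  cmap_fibm : forall phi psi i k, cod phi = dom psi -> i < ocard (cod psi) ->
            k < ocard (fib (comp psi phi) i) ->
            cmap (fibm phi psi i) k
              = fibmapS (ocard (dom phi)) (ocard (dom psi))
                        (cmap (comp psi phi)) (cmap psi) (cmap phi) i k
}.

(* u is trivial if |u| = 1 and R_u = dom : C/u -> C^1 = C. *)
Definition trivial_ob (C : OpCatData) (u : Ob C) : Prop :=
  [/\ ocard u = 1,
      (forall f : Mor C, cod f = u -> fib f 0 = dom f) &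
      (forall phi psi : Mor C, cod phi = dom psi -> cod psi = u ->
          fibm phi psi 0 = phi)].

(* The identification |c| = sum_j |psi|^{-1} j (induced by R_{|d|}) sends
   i < |c| to the pair (j, k) with j = |psi| i and k the position of i in the
   fibre of |psi| over j. *)
Definition ds_j (C : OpCatData) (psi : Mor C) (i : nat) : nat := cmap psi i.
Definition ds_k (C : OpCatData) (psi : Mor C) (i : nat) : nat :=
  index i (preim (ocard (dom psi)) (cmap psi) (cmap psi i)).

Record OpCat := {
  opdata :> OpCatData;
  fib_idm_trivial : forall (a : Ob opdata) i, i < ocard a ->
      trivial_ob (fib (idm a) i);
  (* double slice condition, on objects of (C/d)/psi:
     (phi^psi_{|psi|(i)})^{-1} i = phi^{-1} i *)
  double_slice_ob : forall phi psi : Mor opdata,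
      cod phi = dom psi -> forall i, i < ocard (cod phi) ->
      fib (fibm phi psi (ds_j psi i)) (ds_k psi i) = fib phi i;
  (* double slice condition, on morphisms chi : phi chi -> phi of (C/d)/psi:
     (chi^{psi phi}_j)^{phi^psi_j}_k = chi^phi_i *)
  double_slice_mor : forall chi phi psi : Mor opdata,
      cod chi = dom phi -> cod phi = dom psi -> forall i, i < ocard (cod phi) ->
      fibm (fibm chi (comp psi phi) (ds_j psi i)) (fibm phi psi (ds_j psi i))
           (ds_k psi i)
        = fibm chi phi i
}.

Definition fw_trivial (C : OpCatData) (phi : Mor C) : Prop :=
  forall i, i < ocard (cod phi) -> trivial_ob (fib phi i).

From Pilot Require Import Defs.
From mathcomp Require Import all_boot.

Set Implicit Arguments.
Unset Strict Implicit.
Unset Printing Implicit Defensive.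

(* Every fibre of phi^psi_j is a fibre of phi: if i is the k-th element of
   |psi|^{-1} j, the double slice condition identifies (phi^psi_j)^{-1} k
   with phi^{-1} i. *)

Section Preimage.

Variables (n : nat) (f : nat -> nat) (i : nat).

Lemma mem_preim k : (k \in Defs.preim n f i) = (f k == i) && (k < n).
Proof. by rewrite mem_filter mem_iota add0n. Qed.

Lemma preim_uniq : uniq (Defs.preim n f i).
Proof. exact/filter_uniq/iota_uniq. Qed.

Section NthPreim.

Variables (k : nat) (lt_k : k < size (Defs.preim n f i)).
Let x := nth 0 (Defs.preim n f i) k.

Lemma nth_preimP : f x = i /\ x < n.
Proof.
by have := mem_nth 0 lt_k; rewrite mem_preim => /andP[/eqP].
Qed.

Lemma index_nth_preim : index x (Defs.preim n f (f x)) = k.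
Proof. by case: nth_preimP => -> _; rewrite index_uniq ?preim_uniq. Qed.

End NthPreim.

End Preimage.

Lemma fib_fibm (C : OpCat) (phi psi : Mor C) j k :
  cod phi = dom psi -> j < ocard (cod psi) ->
  k < ocard (cod (fibm phi psi j)) ->
  exists2 i, i < ocard (cod phi) & fib (fibm phi psi j) k = fib phi i.
Proof.
move=> phi_psi lt_j; rewrite cod_fibm // card_fib // => lt_k.
pose i := nth 0 (Defs.preim (ocard (dom psi)) (cmap psi) j) k.
have [psi_i lt_i] := nth_preimP lt_k.
exists i; first by rewrite phi_psi.
have <- : ds_j psi i = j by [].
have <- : ds_k psi i = k by exact: index_nth_preim.
by rewrite double_slice_ob // phi_psi.
Qed.

Theorem lemma8p1 (C : OpCat) (e : Ob C) (phi psi : Mor C) :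
  cod psi = e -> cod phi = dom psi ->
  fw_trivial phi ->
  forall j, j < ocard e -> fw_trivial (fibm phi psi j).
Proof.
move=> <- phi_psi phi_fw j lt_j k lt_k.
have [i lt_i ->] := fib_fibm phi_psi lt_j lt_k.
exact: phi_fw.
Qed.
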